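(* Let $(V,E)$ be a finite graph and $p\in[0,1]$. Let $(\eta_t,\sigma_t)_{t\ge0}$ be a continuous-time Markov jump process on $\{0,1\}^E\times\{-1,1\}^V$ with the following rates: (a) if $\sigma'=\sigma$ and there is $e\in E$ with $\eta'=\eta^e$ and $\gamma_\eta(e)=1$, then $c((\eta,\sigma),(\eta',\sigma'))=\big((1-p)\mathbf 1_{\eta(e)=1}+p\mathbf 1_{\eta(e)=0}\big)\mathbf 1_{(\eta,\sigma)\in\mathcal C}$; (b) if $\sigma'=\sigma$ and there is $e\in E$ with $\eta'=\eta^e$, $\gamma_\eta(e)=0$ and $\delta_\sigma(e)=1$, then $c((\eta,\sigma),(\eta',\sigma'))=\frac12\big((1-p)\mathbf 1_{\eta(e)=1}+p\mathbf 1_{\eta(e)=0}\big)\mathbf 1_{(\eta,\sigma)\in\mathcal C}$; (c) if there are $x\in V$ and $e\in E_x$ with $\sigma'=\sigma^x$, $\eta'=\eta^e$, $\gamma_\eta(e)=0$, $\eta(e)=\delta_\sigma(e)$ and $\eta(f)=0$ for all $f\in E_x\setminus\{e\}$, then $c((\eta,\sigma),(\eta',\sigma'))=\frac14\big((1-p)\mathbf 1_{\eta(e)=1}\mathbf 1_{(\eta,\sigma)\in\mathcal C}+p\mathbf 1_{\eta(e)=0}\mathbf 1_{(\eta',\sigma')\in\mathcal C}\big)$; (d) all other off-diagonal rates are $0$. Suppose $(\eta_0,\sigma_0)$ is distributed according to $IP$. Then for every $x\in V$, $\sigma\in\{-1,1\}^V$ and $s\ge0$, $$\lim_{t\to0}\frac1t\,\mathbb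 P(\sigma_{t+s}=\sigma^x\mid\sigma_s=\sigma)=\frac14\,|E_x|\,p\,(1-p)^{|\{e\in E_x:\ \delta_\sigma(e)=1\}|}.$$
   Context: Edge configurations $\eta\in\{0,1\}^E$ (1 = open), spin configurations $\sigma\in\{-1,1\}^V$. For $e=\langle x,y\rangle$, $\delta_\sigma(e)=\mathbf 1_{\sigma(x)=\sigma(y)}$. $\mathcal C=\{(\eta,\sigma):\eta(e)\le\delta_\sigma(e)\ \forall e\in E\}$. $IP(\eta,\sigma)=\frac1Z\prod_{e\in E}\big(p\mathbf 1_{\eta(e)=1}\delta_\sigma(e)+(1-p)\mathbf 1_{\eta(e)=0}\big)$ with $Z$ the normalizing constant. $E_x$ is the set of edges with endvertex $x$; $\sigma^x$ is $\sigma$ with the spin at $x$ flipped; $\eta^e$ is $\eta$ with the value at $e$ changed. For $e=\langle x,y\rangle$, $\gamma_\eta(e)=1$ if $x,y$ are connected by a path of open edges of $\eta$ not using $e$, and $0$ otherwise. *)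

From HB Require Import structures.
From mathcomp Require Import all_boot all_order all_algebra.
From mathcomp Require Import all_classical all_reals all_analysis.
Set Implicit Arguments. Unset Strict Implicit. Unset Printing Implicit Defensive.
Import Order.TTheory GRing.Theory Num.Theory.
Local Open Scope ring_scope.

(* Simplicity (no loops, no multi-edges) is assumed as
   a hypothesis of the theorem (see simple_graph).  Spins in {-1,1} are
   encoded as booleans (true = +1, false = -1); only equality of spins and
   spin flips matter. *)

Section Model.
Variables (V E : finType) (end1 end2 : E -> V).

Definition simple_graph : Prop :=
  (forall e, end1 e != end2 e) /\
  (forall e f, [set end1 e; end2 e] = [set end1 f; end2 f] -> e = f).

Definition edge_conf := {ffun E -> bool}.   (* eta, true = open *)
Definition spin_conf := {ffun V -> bool}.
Definition state := (edge_conf * spin_conf)%type.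

Definition delta (s : spin_conf) (e : E) : bool := s (end1 e) == s (end2 e).

Definition inC (a : state) : bool := [forall e, a.1 e ==> delta a.2 e].

Definition Ex (x : V) : {set E} := [set e | (end1 e == x) || (end2 e == x)].

Definition flipE (n : edge_conf) (e : E) : edge_conf :=
  [ffun f => if f == e then ~~ n f else n f].
Definition flipV (s : spin_conf) (x : V) : spin_conf :=
  [ffun y => if y == x then ~~ s y else s y].

Definition open_adj_without (n : edge_conf) (e : E) : rel V :=
  fun a b => [exists f, [&& f != e, n f &
     ((end1 f == a) && (end2 f == b)) || ((end1 f == b) && (end2 f == a))]].

Definition gamma (n : edge_conf) (e : E) : bool :=
  connect (open_adj_without n e) (end1 e) (end2 e).

Variable R : realType.
Variable p : R.

Definition IPweight (a : state) : R :=
  \prod_(e : E) (if a.1 e then p * (delta a.2 e)%:R else 1 - p).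
Definition IP (a : state) : R := IPweight a / \sum_(b : state) IPweight b.

(* Since eta' = eta^e determines e and
   sigma' = sigma^x determines x, each sum below has at most one nonzero
   term, i.e. it is exactly the case distinction (a)-(d) of the paper. *)
Definition rate (a b : state) : R :=
  let: (n, s) := a in let: (n', s') := b in
  \sum_(e : E) ((s' == s) && (n' == flipE n e) && gamma n e)%:R *
      ((1 - p) * (n e)%:R + p * (~~ n e)%:R) * (inC a)%:R
  + \sum_(e : E) [&& s' == s, n' == flipE n e, ~~ gamma n e & delta s e]%:R *
      (1 / 2 * ((1 - p) * (n e)%:R + p * (~~ n e)%:R) * (inC a)%:R)
  + \sum_(x : V) \sum_(e in Ex x)
      [&& s' == flipV s x, n' == flipE n e, ~~ gamma n e,
          n e == delta s e & [forall f in Ex x, (f != e) ==> ~~ n f]]%:R *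
      (1 / 4 * ((1 - p) * (n e)%:R * (inC a)%:R
                + p * (~~ n e)%:R * (inC b)%:R)).

Definition Qgen (a b : state) : R :=
  if a == b then - \sum_(c : state | c != a) rate a c else rate a b.

Fixpoint Qpow (k : nat) (a b : state) : R :=
  match k with
  | 0 => (a == b)%:R
  | k.+1 => \sum_(c : state) Qgen a c * Qpow k c b
  end.

(* transition function P_t = exp(tQ) of the Markov jump process *)
Definition Ptrans (t : R) (a b : state) : R :=
  limn (fun N => \sum_(0 <= k < N) (t ^+ k / (k`!)%:R * Qpow k a b)).

Definition law_at (s : R) (b : state) : R := \sum_(a : state) IP a * Ptrans s a b.

Definition prob_spin_at (s : R) (sg : spin_conf) : R :=
  \sum_(a : state | a.2 == sg) law_at s a.

(* P(sigma_s = sg, sigma_{s+t} = sg') by the Markov property *)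
Definition prob_spin_pair (s t : R) (sg sg' : spin_conf) : R :=
  \sum_(a : state | a.2 == sg) \sum_(b : state | b.2 == sg')
     law_at s a * Ptrans t a b.

Definition cond_prob (s t : R) (sg sg' : spin_conf) : R :=
  prob_spin_pair s t sg sg' / prob_spin_at s sg.

End Model.

From Pilot Require Import Defs.
From HB Require Import structures.
From mathcomp Require Import all_boot all_order all_algebra.
From mathcomp Require Import all_classical all_reals all_analysis.
From mathcomp Require Import ring lra.
Import Order.TTheory GRing.Theory Num.Theory.
Local Open Scope ring_scope.
Import numFieldNormedType.Exports.
Local Open Scope classical_set_scope.
Set Implicit Arguments. Unset Strict Implicit. Unset Printing Implicit Defensive.

(* The dynamics is reversible with respect to IP: every move of type (a), (b)
   or (c) and its reverse satisfy detailed balance, so IP is stationary and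
   (eta_s, sigma_s) has law IP.  On a finite state space P_t = exp(tQ), hence
   P_t(a, b) = t Q(a, b) + O(t^2) for a <> b, and the limit is the IP-flux of
   the moves from {sigma_s = sigma} to {sigma = sigma^x}, divided by
   IP(sigma_s = sigma).  Only moves of type (c) flip the spin at x.  For each
   e in E_x the IP-weighted rate of such a move is a product over the edges,
   and summing over eta gives p/4 (1-p)^k IP(sigma), where k is the number of
   sigma-agreeing edges at x: each of them contributes the probability 1-p of
   being closed, or, for e itself, the rate 1-p of closing. *)

Lemma sum_pair_snd (R : nmodType) (A B : finType) (F : A * B -> R) b :
  \sum_(c | c.2 == b) F c = \sum_a F (a, b).
Proof.
transitivity (\sum_(c | xpredT c.1 && (c.2 == b)) F (c.1, c.2)).
  by apply: eq_big => -[].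
rewrite -(pair_big_dep xpredT (fun _ c => c == b) (fun a c => F (a, c))) /=.
by apply: eq_bigr => a _; rewrite big_pred1_eq.
Qed.

Lemma prodr_bool (R : comPzSemiRingType) (I : finType) (B : pred I) :
  \prod_i (B i)%:R = [forall i, B i]%:R :> R.
Proof.
case: (boolP [forall i, B i]) => [/forallP allB | /forallPn[i /negbTE Bi]].
  by rewrite big1 // => i _; rewrite allB.
by rewrite (bigD1 i) //= Bi mul0r.
Qed.

Lemma connect_isolated (T : finType) (r : rel T) u v :
  (forall w, ~~ r u w) -> connect r u v -> v = u.
Proof.
move=> isolated /connectP[[|w ps] /= path_ps ->] //.
by case/andP: path_ps; rewrite (negbTE (isolated w)).
Qed.

Section MatrixExponential.
Variables (R : realType) (S : finType) (Q : S -> S -> R).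

Fixpoint mxpow (k : nat) (a b : S) : R :=
  match k with
  | 0 => (a == b)%:R
  | k.+1 => \sum_c Q a c * mxpow k c b
  end.

Definition mxexp_coeff (t : R) (a b : S) (k : nat) : R := t ^+ k / (k`!)%:R * mxpow k a b.

Definition mxexp (t : R) (a b : S) : R := limn (series (mxexp_coeff t a b)).

Definition mxnorm : R := \sum_a \sum_c `|Q a c|.

Lemma mxnorm_ge0 : 0 <= mxnorm.
Proof. by apply: sumr_ge0 => a _; apply: sumr_ge0. Qed.

Lemma mxpow1 a b : mxpow 1 a b = Q a b.
Proof.
rewrite /= (bigD1 b) //= eqxx mulr1 big1 ?addr0 // => c /negbTE cb.
by rewrite cb mulr0.
Qed.

Lemma norm_mxpow_le k a b : `|mxpow k a b| <= mxnorm ^+ k.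
Proof.
have row_le c : \sum_d `|Q c d| <= mxnorm.
  rewrite /mxnorm [leRHS](bigD1 c) //= lerDl.
  by apply: sumr_ge0 => ? _; apply: sumr_ge0.
elim: k a => [|k IH] a /=; first by case: (a == b); rewrite ?normr1 ?normr0.
rewrite exprS; apply: le_trans (ler_norm_sum _ _ _) _.
apply: (@le_trans _ _ (\sum_c `|Q a c| * mxnorm ^+ k)).
  by apply: ler_sum => c _; rewrite normrM ler_wpM2l.
by rewrite -mulr_suml ler_wpM2r ?exprn_ge0 ?mxnorm_ge0.
Qed.

Lemma norm_mxexp_coeff_le t a b k : `|mxexp_coeff t a b k| <= exp_coeff (`|t| * mxnorm) k.
Proof.
rewrite /mxexp_coeff /exp_coeff /= !normrM normfV normr_nat normrX exprMn mulrAC.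
by rewrite ler_wpM2r ?invr_ge0 // ler_wpM2l ?exprn_ge0 ?norm_mxpow_le.
Qed.

Lemma is_cvg_series_mxexp_coeff t a b : cvgn (series (mxexp_coeff t a b)).
Proof.
apply: normed_cvg; apply: (series_le_cvg _ _ (@norm_mxexp_coeff_le t a b)) => //.
- by move=> k; apply: exp_coeff_ge0; rewrite mulr_ge0 ?mxnorm_ge0.
- exact: is_cvg_series_exp_coeff.
Qed.

Lemma series_exp_coeff_le_expR (x : R) n : 0 <= x -> series (exp_coeff x) n <= expR x.
Proof.
move=> x0; apply: nondecreasing_cvgn_le; last exact: is_cvg_series_exp_coeff.
by apply: nondecreasing_series => k _ _; apply: exp_coeff_ge0.
Qed.

Lemma mxexp_offdiag_sub_le t a b : a != b -> 0 < t <= 1 ->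
  `|mxexp t a b - t * Q a b| <= t ^+ 2 * expR mxnorm.
Proof.
move=> ab /andP[t0 t1].
have partial_le n : (2 <= n)%N ->
    `|series (mxexp_coeff t a b) n - t * Q a b| <= t ^+ 2 * expR mxnorm.
  move=> n2; rewrite /series /= big_ltn ?(leq_trans _ n2) // big_ltn //.
  rewrite {1 2}/mxexp_coeff /= (negbTE ab) mulr0 add0r expr1 divr1 -/(mxpow 1 a b).
  rewrite mxpow1 addrAC subrr add0r; apply: le_trans (ler_norm_sum _ _ _) _.
  apply: (@le_trans _ _ (\sum_(2 <= k < n) t ^+ 2 * exp_coeff mxnorm k)).
    apply: ler_sum_nat => k /andP[k2 _]; apply: le_trans (norm_mxexp_coeff_le _ _ _ _) _.
    rewrite /exp_coeff /= gtr0_norm // exprMn -mulrA ler_wpM2r //.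
      by rewrite mulr_ge0 ?invr_ge0 ?exprn_ge0 ?mxnorm_ge0.
    by rewrite ler_wiXn2l // ltW.
  rewrite -mulr_sumr ler_wpM2l ?exprn_ge0 ?(ltW t0) //.
  apply: (le_trans _ (series_exp_coeff_le_expR n mxnorm_ge0)).
  rewrite /series /= [leRHS](big_cat_nat _ (n := 2)) //= lerDr.
  by apply: sumr_ge0 => k _; apply: exp_coeff_ge0; exact: mxnorm_ge0.
have cvg_partial : `|series (mxexp_coeff t a b) n - t * Q a b| @[n --> \oo] -->
    `|mxexp t a b - t * Q a b|.
  by apply: cvg_norm; apply: cvgB; [exact: is_cvg_series_mxexp_coeff | exact: cvg_cst].
by apply: (cvgr_to_le cvg_partial); exists 2%N.
Qed.

Lemma mxexp_offdiag_rderiv a b : a != b -> t^-1 * mxexp t a b @[t --> 0^'+] --> Q a b.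
Proof.
move=> ab; apply/cvgrPdist_le => eps eps0.
have K0 := expR_ge0 mxnorm.
near=> t.
have t0 : 0 < t by near: t; exact: nbhs_right_gt.
have t1 : t <= 1 by near: t; apply: nbhs_right_ltW; exact: ltr01.
have teps : t <= eps / (expR mxnorm + 1).
  by near: t; apply: nbhs_right_ltW; rewrite divr_gt0 // ltr_pwDr.
rewrite ler_pdivlMr ?ltr_pwDr // in teps.
have -> : Q a b - t^-1 * mxexp t a b = - (t^-1 * (mxexp t a b - t * Q a b)).
  by field; rewrite gt_eqF.
rewrite normrN normrM gtr0_norm ?invr_gt0 //.
apply: (@le_trans _ _ (t^-1 * (t ^+ 2 * expR mxnorm))).
  by rewrite ler_wpM2l ?invr_ge0 ?(ltW t0) ?mxexp_offdiag_sub_le ?t0.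
rewrite expr2 !mulrA mulVf ?gt_eqF // mul1r; nra.
Unshelve. all: by end_near.
Qed.

Lemma mxexp_stationary (pi : S -> R) t b :
  (forall c, \sum_a pi a * Q a c = 0) -> \sum_a pi a * mxexp t a b = pi b.
Proof.
move=> balance.
have mxpowS_stationary k : \sum_a pi a * mxpow k.+1 a b = 0.
  under eq_bigr do rewrite /= mulr_sumr.
  rewrite exchange_big big1 //= => c _.
  by under eq_bigr do rewrite mulrA; rewrite -mulr_suml balance mul0r.
have partial_eq n : (0 < n)%N -> \sum_a pi a * series (mxexp_coeff t a b) n = pi b.
  move=> n0; under eq_bigr do rewrite /series /= mulr_sumr.
  rewrite exchange_big big_ltn //= [X in _ + X]big_nat_cond [X in _ + X]big1 ?addr0.
    under eq_bigr do rewrite /mxexp_coeff expr0 divr1 mul1r /=.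
    rewrite (bigD1 b) //= eqxx mulr1 big1 ?addr0 // => a /negbTE ->.
    by rewrite mulr0.
  case=> [|k _]; first by [].
  under eq_bigr do rewrite /mxexp_coeff mulrCA.
  by rewrite -mulr_sumr mxpowS_stationary mulr0.
have cvg_partial : \sum_a pi a * series (mxexp_coeff t a b) n @[n --> \oo] -->
    \sum_a pi a * mxexp t a b.
  apply: (@cvg_big _ _ +%R 0 xpredT add_continuous _ _ _
    (fun a n => pi a * series (mxexp_coeff t a b) n)) => a _.
  by apply: cvgMr; exact: is_cvg_series_mxexp_coeff.
rewrite -(cvg_lim _ cvg_partial) //; apply: cvg_lim => //; apply: cvg_near_cst.
by near=> n; apply: partial_eq; near: n; exists 1%N.
Unshelve. all: by end_near.
Qed.

End MatrixExponential.

Section ReversibleGenerator.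
Variables (R : realType) (S : finType) (r : S -> S -> R).

Definition generator (a b : S) : R :=
  if a == b then - \sum_(c | c != a) r a c else r a b.

Lemma reversible_stationary (w : S -> R) b :
  (forall a c, w a * r a c = w c * r c a) -> \sum_a w a * generator a b = 0.
Proof.
move=> balance; rewrite (bigD1 b) //= /generator eqxx.
under eq_bigr => a /negbTE ab do rewrite ab balance.
by rewrite -mulr_sumr mulrN addNr.
Qed.

End ReversibleGenerator.

Section Model.
Variables (V E : finType) (end1 end2 : E -> V) (R : realType) (p : R).
Implicit Types (n : edge_conf E) (s : spin_conf V) (e f : E) (x : V).

Local Notation delta := (delta end1 end2).
Local Notation inC := (inC end1 end2).
Local Notation Ex := (Ex end1 end2).
Local Notation gamma := (gamma end1 end2).
Local Notation adj := (open_adj_without end1 end2).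
Local Notation IPweight := (IPweight end1 end2 p).
Local Notation rate := (rate end1 end2 p).

Lemma flipE_at n e : flipE n e e = ~~ n e.
Proof. by rewrite ffunE eqxx. Qed.

Lemma flipE_neq n e f : f != e -> flipE n e f = n f.
Proof. by rewrite ffunE => /negbTE ->. Qed.

Lemma flipEK e : involutive (fun n : edge_conf E => flipE n e).
Proof. by move=> n; apply/ffunP => f; rewrite !ffunE; case: eqP => // ->; rewrite negbK. Qed.

Lemma flipVK x : involutive (fun s : spin_conf V => flipV s x).
Proof. by move=> s; apply/ffunP => y; rewrite !ffunE; case: eqP => // ->; rewrite negbK. Qed.

Lemma eq_flipE n n' e : (n' == flipE n e) = (n == flipE n' e).
Proof. by apply/eqP/eqP => ->; rewrite flipEK. Qed.

Lemma eq_flipV s s' x : (s' == flipV s x) = (s == flipV s' x).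
Proof. by apply/eqP/eqP => ->; rewrite flipVK. Qed.

Lemma flipV_neq s x : (flipV s x == s) = false.
Proof. by apply/negbTE/eqP => /ffunP/(_ x); rewrite ffunE eqxx; case: (s x). Qed.

Lemma flipV_inj_eq s x y : (flipV s x == flipV s y) = (x == y).
Proof.
apply/eqP/eqP => [/ffunP/(_ x)|-> //]; rewrite !ffunE eqxx.
by case: eqP => // _; case: (s x).
Qed.

Lemma adj_sym n e : symmetric (adj n e).
Proof. by move=> u v; apply: eq_existsb => f; rewrite orbC. Qed.

Lemma adj_flipE n e : adj (flipE n e) e =2 adj n e.
Proof.
by move=> u v; apply: eq_existsb => f; case: (eqVneq f e) => //= fe; rewrite flipE_neq.
Qed.

Lemma gamma_flipE n e : gamma (flipE n e) e = gamma n e.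
Proof. by rewrite /Defs.gamma (eq_connect (adj_flipE n e)). Qed.

Lemma inC_connect n s e u v : inC (n, s) -> connect (adj n e) u v -> s u = s v.
Proof.
move=> /forallP compat /connectP[ps]; elim: ps u => [_ _ ->|w ps IH u] //=.
case/andP=> /existsP[f /and3P[_ nf uw]] /IH {}IH /IH <-.
have /= := compat f; rewrite nf /= /Defs.delta.
by case/orP: uw => /andP[/eqP-> /eqP->] /eqP.
Qed.

Lemma inC_gamma_delta n s e : inC (n, s) -> gamma n e -> delta s e.
Proof. by move=> compat /(inC_connect compat)/eqP. Qed.

Lemma inC_flipE_delta n s e : delta s e -> inC (flipE n e, s) = inC (n, s).
Proof.
move=> de; apply: eq_forallb => f /=.
by case: (eqVneq f e) => [->|fe]; rewrite ?de ?implybT ?flipE_neq.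
Qed.

Lemma inC_flipE_gamma n s e : gamma n e -> inC (flipE n e, s) = inC (n, s).
Proof.
move=> ge; case de: (delta s e); first exact: inC_flipE_delta.
have notC n' : gamma n' e -> inC (n', s) = false.
  by move=> ge'; apply/negbTE/negP => /inC_gamma_delta/(_ ge'); rewrite de.
by rewrite !notC ?gamma_flipE.
Qed.

Definition flip_rate n e : R := (1 - p) * (n e)%:R + p * (~~ n e)%:R.

Lemma IPweight_flipE n s e : delta s e ->
  IPweight (n, s) * flip_rate n e = IPweight (flipE n e, s) * flip_rate (flipE n e) e.
Proof.
move=> de; rewrite /IPweight /= (bigD1 e) //= [in RHS](bigD1 e) //= flipE_at de.
under [in RHS]eq_bigr => f fe do rewrite flipE_neq //.
by rewrite /flip_rate flipE_at; case: (n e) => /=; ring.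
Qed.

Hypothesis no_loop : forall e, end1 e != end2 e.

Lemma delta_flipV_notin s x f : f \notin Ex x -> delta (flipV s x) f = delta s f.
Proof.
rewrite inE negb_or => /andP[/negbTE f1 /negbTE f2].
by rewrite /Defs.delta !ffunE f1 f2.
Qed.

Lemma delta_flipV_in s x e : e \in Ex x -> delta (flipV s x) e = ~~ delta s e.
Proof.
have loop := no_loop e; rewrite inE /Defs.delta !ffunE.
case/orP=> /eqP <-; rewrite eqxx; first rewrite [end2 e == _]eq_sym; rewrite (negbTE loop);
  by case: (s _); case: (s _).
Qed.

Lemma IPweight_flipV n s x :
  (forall f, f \in Ex x -> ~~ n f) -> IPweight (n, flipV s x) = IPweight (n, s).
Proof.
move=> closed; apply: eq_bigr => f _ /=.
by case: (boolP (f \in Ex x)) => [/closed/negbTE -> | /delta_flipV_notin ->].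
Qed.

Lemma gamma_isolated n x e :
  e \in Ex x -> [forall f in Ex x, (f != e) ==> ~~ n f] -> ~~ gamma n e.
Proof.
move=> ex /forall_inP closed.
have isolated w : ~~ adj n e x w.
  apply/existsP => -[f /and3P[fe nf xw]].
  have fx : f \in Ex x by rewrite inE; case/orP: xw => /andP[/eqP-> /eqP->]; rewrite eqxx ?orbT.
  by have := closed f fx; rewrite fe nf.
have loop := no_loop e; move: ex; rewrite inE /Defs.gamma.
case/orP=> /eqP ex; [rewrite {1}ex | rewrite (sym_connect_sym (adj_sym n e)) {1}ex];
  by apply/negP => /(connect_isolated isolated) end_x; move: loop; rewrite ex end_x eqxx.
Qed.

Definition rate_a n s n' s' e : R :=
  ((s' == s) && (n' == flipE n e) && gamma n e)%:R * flip_rate n e * (inC (n, s))%:R.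

Definition rate_b n s n' s' e : R :=
  [&& s' == s, n' == flipE n e, ~~ gamma n e & delta s e]%:R *
    (1 / 2 * flip_rate n e * (inC (n, s))%:R).

Definition spin_move n s n' s' x e : bool :=
  [&& s' == flipV s x, n' == flipE n e, ~~ gamma n e,
      n e == delta s e & [forall f in Ex x, (f != e) ==> ~~ n f]].

Definition rate_c n s n' s' x e : R :=
  (spin_move n s n' s' x e)%:R *
    (1 / 4 * ((1 - p) * (n e)%:R * (inC (n, s))%:R + p * (~~ n e)%:R * (inC (n', s'))%:R)).

Lemma rateE n s n' s' : rate (n, s) (n', s') =
  \sum_e rate_a n s n' s' e + \sum_e rate_b n s n' s' e +
  \sum_x \sum_(e in Ex x) rate_c n s n' s' x e.
Proof. by []. Qed.

Lemma rate_a_balance n s n' s' e :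
  IPweight (n, s) * rate_a n s n' s' e = IPweight (n', s') * rate_a n' s' n s e.
Proof.
rewrite /rate_a; have [->|_] := eqVneq s' s; last by rewrite !mul0r !mulr0.
have [->|n'n] := eqVneq n' (flipE n e); last first.
  by rewrite -eq_flipE (negbTE n'n) !mul0r !mulr0.
rewrite flipEK !eqxx gamma_flipE /=; case ge: (gamma n e); last by rewrite !mul0r !mulr0.
rewrite inC_flipE_gamma //; case C: (inC (n, s)); last by rewrite !mulr0.
by rewrite !mul1r !mulr1 IPweight_flipE // (inC_gamma_delta C ge).
Qed.

Lemma rate_b_balance n s n' s' e :
  IPweight (n, s) * rate_b n s n' s' e = IPweight (n', s') * rate_b n' s' n s e.
Proof.
rewrite /rate_b; have [->|_] := eqVneq s' s; last by rewrite !mul0r !mulr0.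
have [->|n'n] := eqVneq n' (flipE n e); last first.
  by rewrite -eq_flipE (negbTE n'n) !mul0r !mulr0.
rewrite flipEK !eqxx gamma_flipE /=; case: (gamma n e); first by rewrite !mul0r !mulr0.
case de: (delta s e); last by rewrite !mul0r !mulr0.
rewrite inC_flipE_delta // !mul1r.
transitivity (IPweight (n, s) * flip_rate n e * (2^-1 * (inC (n, s))%:R)); first ring.
by rewrite IPweight_flipE //; ring.
Qed.

Lemma spin_move_sym n s n' s' x e :
  e \in Ex x -> spin_move n s n' s' x e = spin_move n' s' n s x e.
Proof.
move=> ex; rewrite /spin_move -eq_flipV -eq_flipE.
case: eqP => //= ->; case: eqP => //= ->.
rewrite gamma_flipE flipE_at delta_flipV_in // (inj_eq negb_inj); congr [&& _, _ & _].
by apply: eq_forallb => f; case: (eqVneq f e) => //= fe; rewrite flipE_neq.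
Qed.

Lemma rate_c_balance n s n' s' x e : e \in Ex x ->
  IPweight (n, s) * rate_c n s n' s' x e = IPweight (n', s') * rate_c n' s' n s x e.
Proof.
move=> ex; wlog ne : n s n' s' / n e.
  move=> oriented; case ne: (n e); first exact: oriented.
  case mv: (spin_move n s n' s' x e); last first.
    by rewrite /rate_c (spin_move_sym n') // mv !mul0r !mulr0.
  by move: mv => /and5P[_ /eqP-> _ _ _]; apply/esym/oriented; rewrite flipE_at ne.
rewrite /rate_c (spin_move_sym n') //; case mv: (spin_move n s n' s' x e); last first.
  by rewrite !mul0r !mulr0.
move: mv => /and5P[/eqP-> /eqP-> _ /eqP de /forall_inP closed].
have closed' f : f \in Ex x -> ~~ flipE n e f.
  move=> fx; case: (eqVneq f e) => [->|fe]; first by rewrite flipE_at ne.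
  by rewrite flipE_neq //; have := closed f fx; rewrite fe.
have de' : delta s e by rewrite -de.
have := IPweight_flipE n de'; rewrite /flip_rate flipE_at ne /= => balance.
rewrite IPweight_flipV //.
transitivity (IPweight (n, s) * ((1 - p) * 1 + p * 0) * (4^-1 * (inC (n, s))%:R)).
  by ring.
by rewrite balance; ring.
Qed.

Lemma rate_balance a b : IPweight a * rate a b = IPweight b * rate b a.
Proof.
case: a b => [n s] [n' s']; rewrite !rateE !mulrDr !mulr_sumr.
congr (_ + _ + _).
- by apply: eq_bigr => e _; exact: rate_a_balance.
- by apply: eq_bigr => e _; exact: rate_b_balance.
by apply: eq_bigr => x _; rewrite !mulr_sumr; apply: eq_bigr => e; exact: rate_c_balance.
Qed.

Lemma Ptrans_mxexp : Ptrans end1 end2 p = mxexp (generator rate).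
Proof. by []. Qed.

Lemma law_at_IP t : law_at end1 end2 p t = IP end1 end2 p.
Proof.
apply/funext => b; rewrite /law_at Ptrans_mxexp; apply: mxexp_stationary => c.
under eq_bigr do rewrite /IP mulrAC.
by rewrite -mulr_suml (reversible_stationary _ rate_balance) mul0r.
Qed.

Lemma IPweight_neq0_inC n s : IPweight (n, s) != 0 -> inC (n, s).
Proof.
apply: contraR => /forallPn[f]; rewrite negb_imply => /andP[nf /negbTE de].
by rewrite /IPweight (bigD1 f) //= nf de mulr0 mul0r.
Qed.

Lemma inC_spin_move n s x e : inC (n, s) -> e \in Ex x ->
  (forall f, f \in Ex x -> f != e -> ~~ n f) -> ~~ delta s e ->
  inC (flipE n e, flipV s x).
Proof.
move=> /forallP compat ex closed de; apply/forallP => f /=.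
case: (eqVneq f e) => [->|fe]; first by rewrite delta_flipV_in // de implybT.
rewrite flipE_neq //; case: (boolP (f \in Ex x)) => [fx|/delta_flipV_notin ->].
  by rewrite (negbTE (closed f fx fe)).
exact: compat.
Qed.

Section SpinFlipFlux.
Variables (x : V) (sg : spin_conf V).

Lemma rate_to_flipV n n' :
  rate (n, sg) (n', flipV sg x) = \sum_(e in Ex x) rate_c n sg n' (flipV sg x) x e.
Proof.
rewrite rateE [X in X + _ + _]big1 ?add0r => [|e _]; last first.
  by rewrite /rate_a flipV_neq !mul0r.
rewrite [X in X + _]big1 ?add0r => [|e _]; last by rewrite /rate_b flipV_neq mul0r.
rewrite (bigD1 x) //= [X in _ + X]big1 ?addr0 // => y yx; apply: big1 => e _.
by rewrite /rate_c /spin_move flipV_inj_eq eq_sym (negbTE yx) mul0r.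
Qed.

Lemma sum_rate_to_flipV n : \sum_n' rate (n, sg) (n', flipV sg x) =
  \sum_(e in Ex x) rate_c n sg (flipE n e) (flipV sg x) x e.
Proof.
under eq_bigr do rewrite rate_to_flipV.
rewrite exchange_big /=; apply: eq_bigr => e ex.
rewrite (bigD1 (flipE n e)) //= big1 ?addr0 // => n' /negbTE n'n.
by rewrite /rate_c /spin_move eqxx n'n mul0r.
Qed.

Lemma spin_move_forall n e : e \in Ex x ->
  spin_move n sg (flipE n e) (flipV sg x) x e =
  [forall f, if f == e then n f == delta sg e else (f \in Ex x) ==> ~~ n f].
Proof.
move=> ex; rewrite /spin_move !eqxx /=; apply/idP/forallP.
  case/and3P=> _ de /forall_inP closed f.
  by case: (eqVneq f e) => [->|fe] //; apply/implyP => /closed; rewrite fe.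
move=> local; have closed : [forall f in Ex x, (f != e) ==> ~~ n f].
  apply/forall_inP => f fx; apply/implyP => fe.
  by have := local f; rewrite (negbTE fe) fx.
by have := local e; rewrite eqxx closed (gamma_isolated ex closed) => ->.
Qed.

Definition flux_factor e f (b : bool) : R :=
  (if b then p * (delta sg f)%:R else 1 - p) *
  (if f == e then b == delta sg e else (f \in Ex x) ==> ~~ b)%:R.

Lemma IPweight_rate_c n e : e \in Ex x ->
  IPweight (n, sg) * rate_c n sg (flipE n e) (flipV sg x) x e =
  1 / 4 * (if delta sg e then 1 - p else p) * \prod_f flux_factor e f (n f).
Proof.
move=> ex; rewrite /flux_factor big_split /= prodr_bool -spin_move_forall //.
rewrite -/(IPweight (n, sg)) /rate_c.
case mv: (spin_move _ _ _ _ _ _); last by rewrite !mul0r !mulr0.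
have [->|/IPweight_neq0_inC compat] := eqVneq (IPweight (n, sg)) 0.
  by rewrite !mul0r mulr0.
move: mv => /and5P[_ _ _ /eqP de /forall_inP closed].
rewrite -de compat; case ne: (n e) => /=; first by ring.
rewrite inC_spin_move //=; [ring | | by rewrite -de ne].
by move=> f fx fe; have := closed f fx; rewrite fe.
Qed.

Lemma sum_IPweight_spin : \sum_n IPweight (n, sg) = \prod_f (p * (delta sg f)%:R + (1 - p)).
Proof.
rewrite -(bigA_distr_bigA (fun f (b : bool) => if b then p * (delta sg f)%:R else 1 - p)).
by apply: eq_bigr => f _; rewrite big_bool.
Qed.

Lemma flux_through_edge e : e \in Ex x ->
  \sum_n IPweight (n, sg) * rate_c n sg (flipE n e) (flipV sg x) x e =
  1 / 4 * p * (1 - p) ^+ #|[set f in Ex x | delta sg f]| * \sum_n IPweight (n, sg).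
Proof.
move=> ex; under eq_bigr do rewrite IPweight_rate_c //.
rewrite -mulr_sumr -(bigA_distr_bigA (flux_factor e)) sum_IPweight_spin.
rewrite -prodr_const [\prod_(f in _) _]big_mkcond /= -[RHS]mulrA -big_split /=.
rewrite (bigD1 e) //= [X in _ = _ * X](bigD1 e) //= !mulrA; congr (_ * _).
  by rewrite !big_bool /flux_factor /= eqxx inE ex; case: (delta sg e) => /=; ring.
apply: eq_bigr => f /negbTE fe; rewrite !big_bool /flux_factor /= fe inE.
by case: (f \in Ex x); case: (delta sg f) => /=; ring.
Qed.

Lemma spin_flip_flux :
  \sum_(a | a.2 == sg) \sum_(b | b.2 == flipV sg x) IPweight a * rate a b =
  1 / 4 * #|Ex x|%:R * p * (1 - p) ^+ #|[set f in Ex x | delta sg f]| *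
    \sum_(a | a.2 == sg) IPweight a.
Proof.
rewrite !sum_pair_snd.
under eq_bigr do rewrite sum_pair_snd -mulr_sumr sum_rate_to_flipV mulr_sumr.
rewrite exchange_big /=; under eq_bigr => e ex do rewrite flux_through_edge //.
by rewrite sumr_const -mulr_natl; ring.
Qed.

Lemma spin_flip_flux_IP :
  \sum_(a | a.2 == sg) \sum_(b | b.2 == flipV sg x) IP end1 end2 p a * generator rate a b =
  1 / 4 * #|Ex x|%:R * p * (1 - p) ^+ #|[set f in Ex x | delta sg f]| *
    \sum_(a | a.2 == sg) IP end1 end2 p a.
Proof.
have gen_rate a b : a.2 == sg -> b.2 == flipV sg x -> generator rate a b = rate a b.
  move=> /eqP a_sg /eqP b_sg; rewrite /generator; case: eqP => // ab.
  by move: (flipV_neq sg x); rewrite -b_sg -ab a_sg eqxx.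
under eq_bigr => a a_sg do under eq_bigr => b b_sg do rewrite gen_rate // /IP mulrAC.
under eq_bigr do rewrite -mulr_suml.
by rewrite -mulr_suml spin_flip_flux /IP -mulr_suml mulrA.
Qed.

End SpinFlipFlux.
End Model.

Unset Implicit Arguments.

Theorem proposition9 (V E : finType) (end1 end2 : E -> V) (R : realType) (p : R)
  (hG : simple_graph end1 end2) (hp0 : 0 <= p) (hp1 : p <= 1)
  (x : V) (sg : spin_conf V) (s : R) (hs : 0 <= s)
  (hpos : 0 < prob_spin_at end1 end2 p s sg) :
  (fun t : R => t^-1 * cond_prob end1 end2 p s t sg (flipV sg x)) @ 0^'+ -->
    (1 / 4 * (#|Ex end1 end2 x|)%:R * p
      * (1 - p) ^+ #|[set e in Ex end1 end2 x | delta end1 end2 sg e]| : R).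
Proof.
set Q := generator (rate end1 end2 p); set IP := IP end1 end2 p.
have IP_law := law_at_IP p hG.1 s.
have Pz_eq : prob_spin_at end1 end2 p s sg = \sum_(a | a.2 == sg) IP a.
  by rewrite /prob_spin_at IP_law.
have -> : (fun t => t^-1 * cond_prob end1 end2 p s t sg (flipV sg x)) = (fun t =>
    (\sum_(a | a.2 == sg) \sum_(b | b.2 == flipV sg x) IP a * (t^-1 * mxexp Q t a b))
    / prob_spin_at end1 end2 p s sg).
  apply/funext => t; rewrite /cond_prob /prob_spin_pair IP_law mulrA mulr_sumr.
  by congr (_ * _); apply: eq_bigr => a _; rewrite mulr_sumr; apply: eq_bigr => b _; rewrite mulrCA.
rewrite -[X in _ --> X](mulfK (lt0r_neq0 hpos)) Pz_eq -(spin_flip_flux_IP p hG.1) -Pz_eq.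
apply: cvgMl; apply: (@cvg_big _ _ +%R 0 _ add_continuous) => // a /eqP a_sg.
apply: (@cvg_big _ _ +%R 0 _ add_continuous) => // b /eqP b_sg.
apply: cvgMr; apply: mxexp_offdiag_rderiv; apply: contraFN (flipV_neq sg x) => /eqP ab.
by rewrite -b_sg -ab a_sg.
Qed.
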